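(* Let $b\in\mathbb{R}$ with $0<|b|<1$ and $p(x,\xi,\tau)=\tau^3-3(x^2+\xi^2)\tau-2bx^3$ for $(x,\xi,\tau)\in\mathbb{R}^3$. Then there do not exist real-valued $C^\infty$ functions $L,A,B$ defined on a neighborhood of $(0,0)$ in $\mathbb{R}^2$ such that $p(x,\xi,\tau)=(\tau-L(x,\xi))(\tau^2+A(x,\xi)\tau+B(x,\xi))$ for all $\tau\in\mathbb{R}$ and all $(x,\xi)$ in that neighborhood; i.e. $p$ admits no $C^\infty$ root near the origin. *)

From Stdlib Require Import Reals.
Open Scope R_scope.

Definition inSq (r x y : R) : Prop := Rabs x < r /\ Rabs y < r.

Definition cont2On (r : R) (f : R -> R -> R) : Prop :=
  forall x y, inSq r x y ->
    forall eps, eps > 0 -> exists delta, delta > 0 /\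
      forall x' y', Rabs (x' - x) < delta -> Rabs (y' - y) < delta ->
        Rabs (f x' y' - f x y) < eps.

Fixpoint CkOn (r : R) (k : nat) (f : R -> R -> R) : Prop :=
  match k with
  | O => cont2On r f
  | S k' => exists fx fy : R -> R -> R,
      (forall x y, inSq r x y -> derivable_pt_lim (fun t => f t y) x (fx x y)) /\
      (forall x y, inSq r x y -> derivable_pt_lim (fun t => f x t) y (fy x y)) /\
      CkOn r k' fx /\ CkOn r k' fy
  end.

Definition smoothOn (r : R) (f : R -> R -> R) : Prop := forall k, CkOn r k f.

Definition p (b x xi tau : R) : R :=
  tau ^ 3 - 3 * (x ^ 2 + xi ^ 2) * tau - 2 * b * x ^ 3.

From Stdlib Require Import Reals Lra Psatz.
Open Scope R_scope.

(* Suppose [L] were a C^1 root of [p] near 0.  Since [p] vanishes only at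
   [tau = 0] over [(0,0)], [L 0 0 = 0], and since [p] is homogeneous of
   degree 3, the slope [L(t x, t xi) / t] is a root of [p b x xi] for every
   [t <> 0].  Letting [t -> 0], the directional derivative
   [x a + xi beta] of [L] at the origin is a root of [p b x xi] for every
   direction [(x, xi)].  The four directions [(1,0)], [(1,1)], [(1,-1)],
   [(0,1)] then give a polynomial system in [a], [beta] that forces [b = 0]. *)

Lemma p_homogeneous (b t x xi tau : R) :
  p b (t * x) (t * xi) (t * tau) = t ^ 3 * p b x xi tau.
Proof. unfold p; ring. Qed.

Lemma p_continuous (b x xi : R) : continuity (p b x xi).
Proof. intros tau; unfold p; reg. Qed.

Lemma derivable_pt_lim_approx (f : R -> R) (x l eps : R) :
  derivable_pt_lim f x l -> 0 < eps ->
  exists d, 0 < d /\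
    forall h, Rabs h < d -> Rabs (f (x + h) - f x - l * h) <= eps * Rabs h.
Proof.
  intros Hf Heps.
  destruct (Hf eps Heps) as [[d Hd] Happrox]; simpl in Happrox.
  exists d; split; [exact Hd|]; intros h Hh.
  destruct (Req_dec h 0) as [->|hn].
  { rewrite Rplus_0_r, Rmult_0_r, Rabs_R0.
    replace (f x - f x - 0) with 0 by ring; rewrite Rabs_R0; lra. }
  replace (f (x + h) - f x - l * h) with (h * ((f (x + h) - f x) / h - l))
    by (field; exact hn).
  rewrite Rabs_mult, Rmult_comm.
  apply Rmult_le_compat_r; [apply Rabs_pos|].
  left; exact (Happrox h hn Hh).
Qed.

Lemma slope_limit_root (g phi : R -> R) (l d : R) :
  derivable_pt_lim g 0 l -> g 0 = 0 -> continuity_pt phi l -> 0 < d ->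
  (forall t, t <> 0 -> Rabs t < d -> phi (g t / t) = 0) ->
  phi l = 0.
Proof.
  intros Hg Hg0 Hphi Hd Hroots.
  destruct (Req_dec (phi l) 0) as [E|E]; [exact E|exfalso].
  destruct (Hphi (Rabs (phi l)) (Rabs_pos_lt _ E)) as [d1 [Hd1 Hnear]].
  destruct (Hg d1 Hd1) as [[d2 Hd2] Hslope]; simpl in Hslope.
  set (t := Rmin d (Rmin d1 d2) / 2).
  assert (Ht : 0 < t /\ t < d /\ t < d2).
  { assert (0 < Rmin d (Rmin d1 d2)) by (repeat apply Rmin_pos; lra).
    assert (Rmin d (Rmin d1 d2) <= d) by apply Rmin_l.
    assert (Rmin d (Rmin d1 d2) <= d2)
      by (eapply Rle_trans; [apply Rmin_r | apply Rmin_r]).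
    unfold t; lra. }
  assert (Habs_t : Rabs t = t) by (apply Rabs_right; lra).
  assert (Hroot : phi (g t / t) = 0) by (apply Hroots; [lra | rewrite Habs_t; lra]).
  assert (Hclose : Rabs (g t / t - l) < d1).
  { specialize (Hslope t ltac:(lra) ltac:(rewrite Habs_t; lra)).
    rewrite Rplus_0_l, Hg0, Rminus_0_r in Hslope; exact Hslope. }
  destruct (Req_dec (g t / t) l) as [Heq|Hneq].
  - apply E; rewrite <- Heq; exact Hroot.
  - specialize (Hnear (g t / t) (conj (conj I (not_eq_sym Hneq)) Hclose)).
    simpl in Hnear; unfold R_dist in Hnear.
    rewrite Hroot, Rminus_0_l, Rabs_Ropp in Hnear; lra.
Qed.

Section DirectionalDerivative.

Variables (r : R) (L fx fy : R -> R -> R).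
Hypothesis r_pos : 0 < r.
Hypothesis L_fx : forall x y, inSq r x y -> derivable_pt_lim (fun t => L t y) x (fx x y).
Hypothesis L_fy : forall x y, inSq r x y -> derivable_pt_lim (fun t => L x t) y (fy x y).
Hypothesis fx_cont : cont2On r fx.

Lemma inSq0 : inSq r 0 0.
Proof. unfold inSq; rewrite Rabs_R0; lra. Qed.

Lemma L_increment_x (s y : R) : Rabs s < r -> Rabs y < r ->
  exists th, Rabs th <= Rabs s /\ L s y - L 0 y = fx th y * s.
Proof.
  intros Hs Hy.
  destruct (Rtotal_order s 0) as [Hneg | [-> | Hpos]].
  - destruct (MVT_cor2 (fun u => L u y) (fun u => fx u y) s 0 Hneg)
      as [th [Hmvt Hth]].
    { intros u Hu; apply L_fx; split; [|exact Hy].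
      rewrite Rabs_left1 in Hs by lra; rewrite Rabs_left1 by lra; lra. }
    exists th; split.
    + rewrite !Rabs_left by lra; lra.
    + simpl in Hmvt; lra.
  - exists 0; split; [lra | ring].
  - destruct (MVT_cor2 (fun u => L u y) (fun u => fx u y) 0 s Hpos)
      as [th [Hmvt Hth]].
    { intros u Hu; apply L_fx; split; [|exact Hy].
      rewrite Rabs_right in Hs by lra; rewrite Rabs_right by lra; lra. }
    exists th; split.
    + rewrite !Rabs_right by lra; lra.
    + simpl in Hmvt; lra.
Qed.

(* The usual proof that continuous partials give a differential, with only
   [fx] assumed continuous: MVT in [x], then the derivative in [y] at 0. *)
Lemma directional_derivative (x xi : R) : Rabs x <= 1 -> Rabs xi <= 1 ->
  derivable_pt_lim (fun t => L (t * x) (t * xi)) 0 (x * fx 0 0 + xi * fy 0 0).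
Proof.
  intros Hx Hxi eps Heps.
  destruct (derivable_pt_lim_approx _ _ _ (eps / 2) (L_fy 0 0 inSq0) ltac:(lra))
    as [d1 [Hd1 Hy_approx]].
  destruct (fx_cont 0 0 inSq0 (eps / 2) ltac:(lra)) as [d2 [Hd2 Hfx_near]].
  assert (Hm : 0 < Rmin r (Rmin d1 d2)) by (repeat apply Rmin_pos; lra).
  exists (mkposreal _ Hm); simpl; intros h hn Hh.
  assert (Hh_r : Rabs h < r) by (eapply Rlt_le_trans; [exact Hh | apply Rmin_l]).
  assert (Hh_d1 : Rabs h < d1)
    by (eapply Rlt_le_trans; [exact Hh | eapply Rle_trans; [apply Rmin_r | apply Rmin_l]]).
  assert (Hh_d2 : Rabs h < d2)
    by (eapply Rlt_le_trans; [exact Hh | eapply Rle_trans; [apply Rmin_r | apply Rmin_r]]).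
  assert (Hh_pos : 0 < Rabs h) by (apply Rabs_pos_lt; exact hn).
  assert (Hhx : Rabs (h * x) <= Rabs h) by (rewrite Rabs_mult; nra).
  assert (Hhxi : Rabs (h * xi) <= Rabs h) by (rewrite Rabs_mult; nra).
  destruct (L_increment_x (h * x) (h * xi) ltac:(lra) ltac:(lra)) as [th [Hth Hincr]].
  assert (Herr_x : Rabs (x * (fx th (h * xi) - fx 0 0)) < eps / 2).
  { rewrite Rabs_mult.
    assert (Rabs (fx th (h * xi) - fx 0 0) < eps / 2)
      by (apply Hfx_near; rewrite Rminus_0_r; lra).
    assert (0 <= Rabs (fx th (h * xi) - fx 0 0)) by apply Rabs_pos.
    nra. }
  assert (Herr_y : Rabs (L 0 (h * xi) - L 0 0 - fy 0 0 * (h * xi)) <= eps / 2 * Rabs h).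
  { specialize (Hy_approx (h * xi) ltac:(lra)); rewrite Rplus_0_l in Hy_approx.
    assert (0 < eps / 2) by lra; nra. }
  replace ((L ((0 + h) * x) ((0 + h) * xi) - L (0 * x) (0 * xi)) / h
           - (x * fx 0 0 + xi * fy 0 0))
    with (x * (fx th (h * xi) - fx 0 0)
          + (L 0 (h * xi) - L 0 0 - fy 0 0 * (h * xi)) / h).
  2: { rewrite Rplus_0_l, !Rmult_0_l.
       replace (L (h * x) (h * xi)) with (L 0 (h * xi) + fx th (h * xi) * (h * x))
         by lra.
       field; exact hn. }
  assert (Rabs ((L 0 (h * xi) - L 0 0 - fy 0 0 * (h * xi)) / h) <= eps / 2).
  { unfold Rdiv; rewrite Rabs_mult, Rabs_inv.
    apply (Rmult_le_reg_r (Rabs h)); [exact Hh_pos|].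
    rewrite Rmult_assoc, Rinv_l by lra; lra. }
  eapply Rle_lt_trans; [apply Rabs_triang | lra].
Qed.

End DirectionalDerivative.

Lemma p_root_over_origin (b tau : R) : p b 0 0 tau = 0 -> tau = 0.
Proof.
  unfold p; intros H.
  destruct (Req_dec tau 0) as [E | E]; [exact E | exfalso].
  apply (pow_nonzero tau 3 E); rewrite <- H; ring.
Qed.

Lemma p_roots_not_linear (b a beta : R) : b <> 0 ->
  ~ (forall x xi, Rabs x <= 1 -> Rabs xi <= 1 -> p b x xi (x * a + xi * beta) = 0).
Proof.
  intros Hb Hroots.
  assert (H10 : p b 1 0 (1 * a + 0 * beta) = 0)
    by (apply Hroots; split_Rabs; lra).
  assert (H11 : p b 1 1 (1 * a + 1 * beta) = 0)
    by (apply Hroots; split_Rabs; lra).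
  assert (H1m : p b 1 (-1) (1 * a + -1 * beta) = 0)
    by (apply Hroots; split_Rabs; lra).
  assert (H01 : p b 0 1 (0 * a + 1 * beta) = 0)
    by (apply Hroots; split_Rabs; lra).
  unfold p in H10, H11, H1m, H01.
  assert (F1 : a * beta ^ 2 = a) by nra.
  assert (F2 : beta * (a ^ 2 - 1) = 0) by nra.
  destruct (Rmult_integral _ _ F2) as [-> | Ha].
  - assert (a = 0) by nra; subst a; apply Hb; nra.
  - assert (a <> 0) by (intros ->; nra).
    assert (Hbeta2 : beta ^ 2 = 1) by (apply (Rmult_eq_reg_l a); nra).
    assert (beta * (beta ^ 2 - 3) = 0) by nra.
    rewrite Hbeta2 in *; nra.
Qed.

Theorem mainTheorem10 (b : R) (hb0 : 0 < Rabs b) (hb1 : Rabs b < 1) :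
  ~ exists (r : R) (L A B : R -> R -> R),
      0 < r /\ smoothOn r L /\ smoothOn r A /\ smoothOn r B /\
      forall x xi tau, inSq r x xi ->
        p b x xi tau = (tau - L x xi) * (tau ^ 2 + A x xi * tau + B x xi).
Proof.
  intros [r [L [A [B [Hr [HL [_ [_ Hfactor]]]]]]]].
  assert (Hb : b <> 0) by (intros ->; rewrite Rabs_R0 in hb0; lra).
  assert (Hroot : forall x xi, inSq r x xi -> p b x xi (L x xi) = 0)
    by (intros x xi H; rewrite Hfactor by exact H; ring).
  assert (HL00 : L 0 0 = 0) by exact (p_root_over_origin b _ (Hroot 0 0 (inSq0 r Hr))).
  destruct (HL 1%nat) as [fx [fy [Hfx [Hfy [Hfx_cont _]]]]].
  apply (p_roots_not_linear b (fx 0 0) (fy 0 0) Hb); intros x xi Hx Hxi.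
  apply (slope_limit_root (fun t => L (t * x) (t * xi)) (p b x xi) _ r).
  - exact (directional_derivative r L fx fy Hr Hfx Hfy Hfx_cont x xi Hx Hxi).
  - rewrite !Rmult_0_l; exact HL00.
  - apply p_continuous.
  - exact Hr.
  - intros t tn Ht.
    assert (Hsq : inSq r (t * x) (t * xi)).
    { assert (0 <= Rabs t) by apply Rabs_pos.
      split; rewrite Rabs_mult; nra. }
    apply (Rmult_eq_reg_l (t ^ 3)); [| apply pow_nonzero; exact tn].
    rewrite <- p_homogeneous, Rmult_0_r.
    replace (t * (L (t * x) (t * xi) / t)) with (L (t * x) (t * xi))
      by (field; exact tn).
    exact (Hroot _ _ Hsq).
Qed.
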